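(* Let $p>0$, $N\ge2$, $1\le K\le N-1$, $\alpha_1,\dots,\alpha_N>0$ with $\sum_{j=1}^K\alpha_j^{-2/p}=\sum_{j=K+1}^N\alpha_j^{-2/p}$, let $a\in\mathbb{R}$, and let $L_+$ be the linearized operator at the shifted state with shift $a$. For $\lambda<1$ let $v=v(\cdot;\lambda)$ be the unique $C^1(\mathbb{R})$ solution of $-v''+v-(2p+1)(p+1)\operatorname{sech}^2(px)v=\lambda v$ with $\lim_{x\to+\infty}v(x)e^{\sqrt{1-\lambda}x}=1$. Then $\lambda_0\in(-\infty,1)$ is an eigenvalue of $L_+$ if and only if, with $v=v(\cdot;\lambda_0)$, one of the following holds: (a) $v(a)=0$; (b) $v(-a)=0$; (c) $v(-a)v'(a)+v(a)v'(-a)=0$. Moreover, $\lambda_0$ has multiplicity $K-1$ in case (a), $N-K-1$ in case (b), and is simple in case (c); if $\lambda_0$ satisfies several of the cases, its multiplicity is the sum of the multiplicities of those cases.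
   Context: $\Gamma$ is a star graph of $N$ half-lines $\mathbb{R}^+$ joined at the vertex $x=0$; $L^2(\Gamma)=\oplus_{j=1}^NL^2(\mathbb{R}^+)$; $H^1_\Gamma=\{\Psi\in\oplus_jH^1(\mathbb{R}^+):\alpha_1^{1/p}\psi_1(0)=\dots=\alpha_N^{1/p}\psi_N(0)\}$; $H^2_\Gamma=\{\Psi\in\oplus_jH^2(\mathbb{R}^+)\cap H^1_\Gamma:\sum_j\alpha_j^{-1/p}\psi_j'(0)=0\}$. The shifted state is $\Phi=(\phi_1,\dots,\phi_N)^T$ with $\phi_j(x)=\alpha_j^{-1/p}\phi(x+a)$ for $j\le K$, $\phi_j(x)=\alpha_j^{-1/p}\phi(x-a)$ for $j>K$, $\phi(x)=\operatorname{sech}^{1/p}(px)$. $L_+:H^2_\Gamma\subset L^2(\Gamma)\to L^2(\Gamma)$ acts by $(L_+U)_j=-u_j''+u_j-(2p+1)(p+1)\alpha_j^2\phi_j^{2p}u_j$. *)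

From Stdlib Require Import Reals Lra.
From Coquelicot Require Import Coquelicot.
Open Scope R_scope.

(* Edges are indexed 0-based by j < N; the paper's edges 1..K are j < K,
   the edges K+1..N are K <= j < N. *)

Fixpoint rsum (f : nat -> R) (n : nat) : R :=
  match n with
  | O => 0
  | S n' => rsum f n' + f n'
  end.

Definition sech (x : R) : R := / cosh x.

Definition phi (p x : R) : R := Rpower (sech (p * x)) (1 / p).

Definition Phi_comp (p : R) (K : nat) (alpha : nat -> R) (a : R)
  (j : nat) (x : R) : R :=
  if (j <? K)%nat then Rpower (alpha j) (- (1 / p)) * phi p (x + a)
  else Rpower (alpha j) (- (1 / p)) * phi p (x - a).

Definition Lplus_pot (p : R) (K : nat) (alpha : nat -> R) (a : R)
  (j : nat) (x : R) : R :=
  (2 * p + 1) * (p + 1) * (alpha j) ^ 2 * Rpower (Phi_comp p K alpha a j x) (2 * p).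

(* u : R -> R, considered on the half-line [0, +oo), belongs (classically)
   to H^2(R^+): twice differentiable at every x >= 0, with u, u', u''
   square integrable on [0, +oo). *)
Definition H2_halfline (u : R -> R) : Prop :=
  (forall x, 0 <= x -> ex_derive u x /\ ex_derive (Derive u) x) /\
  ex_RInt_gen (fun x => (u x) ^ 2) (at_point 0) (Rbar_locally p_infty) /\
  ex_RInt_gen (fun x => (Derive u x) ^ 2) (at_point 0) (Rbar_locally p_infty) /\
  ex_RInt_gen (fun x => (Derive (Derive u) x) ^ 2) (at_point 0) (Rbar_locally p_infty).

Definition in_H2_Gamma (p : R) (N : nat) (alpha : nat -> R)
  (U : nat -> R -> R) : Prop :=
  (forall j, (j < N)%nat -> H2_halfline (U j)) /\
  (forall i j, (i < N)%nat -> (j < N)%nat ->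
     Rpower (alpha i) (1 / p) * U i 0 = Rpower (alpha j) (1 / p) * U j 0) /\
  rsum (fun j => Rpower (alpha j) (- (1 / p)) * Derive (U j) 0) N = 0.

Definition Lplus_eigvec (p : R) (N K : nat) (alpha : nat -> R) (a lambda : R)
  (U : nat -> R -> R) : Prop :=
  in_H2_Gamma p N alpha U /\
  forall j x, (j < N)%nat -> 0 < x ->
    - Derive (Derive (U j)) x + U j x - Lplus_pot p K alpha a j x * U j x
      = lambda * U j x.

Definition is_zero_Gamma (N : nat) (U : nat -> R -> R) : Prop :=
  forall j x, (j < N)%nat -> 0 <= x -> U j x = 0.

Definition Lplus_eigenvalue (p : R) (N K : nat) (alpha : nat -> R) (a lambda : R)
  : Prop :=
  exists U, Lplus_eigvec p N K alpha a lambda U /\ ~ is_zero_Gamma N U.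

Definition eigenspace_dim (p : R) (N K : nat) (alpha : nat -> R) (a lambda : R)
  (m : nat) : Prop :=
  exists F : nat -> nat -> R -> R,
    (forall k, (k < m)%nat -> Lplus_eigvec p N K alpha a lambda (F k)) /\
    (forall c : nat -> R,
        is_zero_Gamma N (fun j x => rsum (fun k => c k * F k j x) m) ->
        forall k, (k < m)%nat -> c k = 0) /\
    (forall U, Lplus_eigvec p N K alpha a lambda U ->
       exists c : nat -> R,
         forall j x, (j < N)%nat -> 0 <= x ->
           U j x = rsum (fun k => c k * F k j x) m).

(* On each edge an eigenfunction solves -u'' + u - (2p+1)(p+1) sech^2(p(x +/- a)) u = lambda u
   on the half-line and is square integrable.  The decaying solution v(. +/- a) solves the same
   equation, the Wronskian of two square-integrable solutions vanishes, and hence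
   u_j = c_j v(x +/- a).
   The eigenspace is therefore isomorphic to the space of coefficient vectors c satisfying the
   two vertex conditions: continuity of alpha_j^(1/p) c_j v(+/- a) and the Kirchhoff law
   sum_j alpha_j^(-1/p) c_j v'(+/- a) = 0.  If v(a) and v(-a) are nonzero, continuity leaves a
   line c_j = g alpha_j^(-1/p) / v(+/- a), and the balance condition turns the Kirchhoff law into
   g (v(-a) v'(a) + v(a) v'(-a)) = 0.  If v(a) = 0, continuity kills the coefficients of the other
   edges and, since v and v' never vanish together, the Kirchhoff law is one nontrivial equation
   on the K remaining ones; symmetrically for v(-a) = 0, and if v(a) = v(-a) = 0 it is one
   equation on all N coefficients. *)

From Stdlib Require Import Reals Lra Lia.
From Coquelicot Require Import Coquelicot.
Open Scope R_scope.

(** * Linear second-order equations on a half-line *)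

Lemma is_derive_Rmult (f g : R -> R) (x df dg : R) :
  is_derive f x df -> is_derive g x dg ->
  is_derive (fun t => f t * g t) x (df * g x + f x * dg).
Proof. intros Hf Hg; apply (is_derive_mult f g x df dg Hf Hg); intros; apply Rmult_comm. Qed.

Lemma continuous_of_ex_derive (f : R -> R) (x : R) : ex_derive f x -> continuous f x.
Proof. apply (ex_derive_continuous (K := R_AbsRing) (V := R_NormedModule)). Qed.

Lemma continuity_pt_of_is_derive (f : R -> R) (x df : R) :
  is_derive f x df -> continuity_pt f x.
Proof. intros H; apply continuity_pt_filterlim, continuous_of_ex_derive; now exists df. Qed.

Lemma derive_nonpos_nonincreasing (l : R) (g g' : R -> R) :
  (forall x, l < x -> is_derive g x (g' x)) ->
  (forall x, l < x -> g' x <= 0) ->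
  forall x y, l < x -> x <= y -> g y <= g x.
Proof.
  intros Hd Hneg x y Hx Hxy.
  destruct (MVT_gen g x y g') as [c [Hc Hmvt]];
    rewrite ?Rmin_left, ?Rmax_right in * by lra.
  - intros t Ht; apply Hd; lra.
  - intros t Ht; apply (continuity_pt_of_is_derive _ _ (g' t)), Hd; lra.
  - assert (g' c <= 0) by (apply Hneg; lra). nra.
Qed.

Lemma derive_zero_constant (l : R) (g : R -> R) :
  (forall x, l < x -> is_derive g x 0) ->
  forall x y, l < x -> l < y -> g x = g y.
Proof.
  intros Hd x y Hx Hy.
  assert (Hmin : l < Rmin x y) by now apply Rmin_glb_lt.
  destruct (MVT_gen g x y (fun _ => 0)) as [c [_ Hmvt]].
  - intros t Ht; apply Hd; simpl in Ht; lra.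
  - intros t Ht; apply (continuity_pt_of_is_derive _ _ 0), Hd; simpl in Ht; lra.
  - lra.
Qed.

(* E e^{-Mx} is nonincreasing and E e^{Mx} nondecreasing. *)
Lemma gronwall_zero (l M : R) (E E' : R -> R) :
  (forall x, l < x -> is_derive E x (E' x)) ->
  (forall x, l < x -> Rabs (E' x) <= M * E x) ->
  (forall x, l < x -> 0 <= E x) ->
  forall x0, l < x0 -> E x0 = 0 -> forall x, l < x -> E x = 0.
Proof.
  intros Hd Hb Hpos x0 Hx0 HE0 x Hx.
  assert (HEx := Hpos x Hx).
  destruct (Rle_lt_dec x0 x) as [Hle | Hlt].
  - assert (Hmono := derive_nonpos_nonincreasing l (fun y => E y * exp (- M * y))
      (fun y => E' y * exp (- M * y) + E y * (- M * exp (- M * y)))).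
    assert (E x * exp (- M * x) <= E x0 * exp (- M * x0)).
    { apply Hmono; auto.
      - intros y Hy; apply (is_derive_Rmult E (fun t => exp (- M * t)));
          [now apply Hd | auto_derive; auto; ring].
      - intros y Hy; pose proof (proj1 (Rabs_le_between _ _) (Hb y Hy));
          pose proof (exp_pos (- M * y)); nra. }
    pose proof (exp_pos (- M * x)); nra.
  - assert (Hmono := derive_nonpos_nonincreasing l (fun y => - (E y * exp (M * y)))
      (fun y => - (E' y * exp (M * y) + E y * (M * exp (M * y))))).
    assert (- (E x0 * exp (M * x0)) <= - (E x * exp (M * x))).
    { apply Hmono; auto; try lra.
      - intros y Hy; apply (is_derive_opp (fun y => E y * exp (M * y))).
        apply (is_derive_Rmult E (fun t => exp (M * t))); [now apply Hd | auto_derive; auto; ring].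
      - intros y Hy; pose proof (proj1 (Rabs_le_between _ _) (Hb y Hy));
          pose proof (exp_pos (M * y)); pose proof (Hpos y Hy); nra. }
    pose proof (exp_pos (M * x)); nra.
Qed.

Lemma two_abs_mult_le (x y : R) : 2 * Rabs (x * y) <= x ^ 2 + y ^ 2.
Proof.
  rewrite Rabs_mult, <- (pow2_abs x), <- (pow2_abs y).
  pose proof (pow2_ge_0 (Rabs x - Rabs y)); nra.
Qed.

Lemma linear_ode2_zero (l M : R) (q y y' : R -> R) :
  (forall x, l < x -> is_derive y x (y' x)) ->
  (forall x, l < x -> is_derive y' x (q x * y x)) ->
  (forall x, l < x -> Rabs (q x) <= M) ->
  forall x0, l < x0 -> y x0 = 0 -> y' x0 = 0 -> forall x, l < x -> y x = 0.
Proof.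
  intros Hy Hy' Hq x0 Hx0 Hy0 Hy'0 x Hx.
  assert (Henergy : y x * y x + y' x * y' x = 0); [| nra].
  apply (gronwall_zero l (1 + M) (fun t => y t * y t + y' t * y' t)
           (fun t => 2 * (y t * y' t) * (1 + q t))) with x0; auto.
  - intros t Ht; cbv beta.
    replace (2 * (y t * y' t) * (1 + q t))
      with ((y' t * y t + y t * y' t) + (q t * y t * y' t + y' t * (q t * y t))) by ring.
    apply (is_derive_plus (K := R_AbsRing) (fun t => y t * y t) (fun t => y' t * y' t));
      apply is_derive_Rmult; auto.
  - intros t Ht.
    rewrite Rabs_mult, (Rabs_mult 2), (Rabs_right 2) by lra.
    pose proof (two_abs_mult_le (y t) (y' t)); pose proof (Rabs_pos (1 + q t)).
    assert (Rabs (1 + q t) <= 1 + M).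
    { pose proof (Rabs_triang 1 (q t)); rewrite Rabs_R1 in *; pose proof (Hq t Ht); lra. }
    replace (y t * y t + y' t * y' t) with (y t ^ 2 + y' t ^ 2) by ring. nra.
  - intros; nra.
  - rewrite Hy0, Hy'0; ring.
Qed.

Lemma wronskian_constant (l : R) (q u u' w w' : R -> R) :
  (forall x, l < x -> is_derive u x (u' x)) ->
  (forall x, l < x -> is_derive u' x (q x * u x)) ->
  (forall x, l < x -> is_derive w x (w' x)) ->
  (forall x, l < x -> is_derive w' x (q x * w x)) ->
  forall x y, l < x -> l < y ->
    u x * w' x - u' x * w x = u y * w' y - u' y * w y.
Proof.
  intros Hu Hu' Hw Hw'.
  apply (derive_zero_constant l (fun t => u t * w' t - u' t * w t)).
  intros x Hx.
  replace 0 with ((u' x * w' x + u x * (q x * w x)) - (q x * u x * w x + u' x * w' x)) by ring.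
  apply (is_derive_minus (K := R_AbsRing) (fun t => u t * w' t) (fun t => u' t * w t));
    apply is_derive_Rmult; auto.
Qed.

(** * Improper integrals on [0, +oo) *)

Lemma ex_RInt_continuous_R (f : R -> R) (u w : R) :
  (forall x, continuous f x) -> ex_RInt f u w.
Proof. intros Hc; apply (ex_RInt_continuous (V := R_CompleteNormedModule)); auto. Qed.

Lemma ex_RInt_gen_of_tail_small (f : R -> R) :
  (forall x, continuous f x) ->
  (forall eps : posreal, exists T, forall u w, T <= u -> u <= w -> Rabs (RInt f u w) < eps) ->
  ex_RInt_gen f (at_point 0) (Rbar_locally p_infty).
Proof.
  intros Hc Htail.
  set (F := fun t => RInt f 0 t).
  assert (HF : forall t, is_derive F t (f t)).
  { intros t; apply (is_derive_RInt f F 0 t); [| apply Hc].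
    apply filter_forall; intros y; apply (RInt_correct (V := R_CompleteNormedModule)).
    now apply ex_RInt_continuous_R. }
  assert (Hdiff : forall u w, F w - F u = RInt f u w).
  { intros u w; unfold F.
    rewrite <- (RInt_Chasles (V := R_CompleteNormedModule) f 0 u w)
      by now apply ex_RInt_continuous_R.
    simpl; unfold plus; simpl; ring. }
  destruct (proj1 (filterlim_locally_cauchy (F := Rbar_locally p_infty) F)) as [l Hl].
  { intros eps; destruct (Htail eps) as [T HT].
    exists (fun u => T < u); split; [now exists T |].
    intros u w Hu Hw; destruct (Rle_lt_dec u w).
    - change (Rabs (F w - F u) < eps); rewrite Hdiff; apply HT; lra.
    - apply ball_sym; change (Rabs (F u - F w) < eps); rewrite Hdiff; apply HT; lra. }
  exists (l - F 0).
  apply (is_RInt_gen_ext (Derive F)).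
  { apply filter_forall; intros ab x _; now apply is_derive_unique. }
  apply is_RInt_gen_Derive; auto.
  - apply filter_forall; intros ab x _; now exists (f x).
  - apply filter_forall; intros ab x _.
    apply (continuous_ext f); [intros; symmetry; now apply is_derive_unique | apply Hc].
  - intros P HP; now apply locally_singleton in HP.
Qed.

Lemma RInt_exp_decay_bound (f : R -> R) (C b X u w : R) :
  0 <= C -> 0 < b -> (forall x, continuous f x) ->
  (forall x, X <= x -> Rabs (f x) <= C * exp (- (b * x))) ->
  X <= u -> u <= w -> Rabs (RInt f u w) <= C / b * exp (- (b * u)).
Proof.
  intros HC Hb Hc Hbound Hu Huw.
  set (g := fun x => C * exp (- (b * x))).
  assert (Hg : forall x, is_derive (fun x => - (C / b) * exp (- (b * x))) x (g x)).
  { intros x; unfold g; auto_derive; auto; field; lra. }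
  assert (Hgc : forall x, continuous g x).
  { intros x; apply continuous_of_ex_derive.
    unfold g; auto_derive; auto. }
  eapply Rle_trans; [apply abs_RInt_le; [lra | now apply ex_RInt_continuous_R] |].
  eapply Rle_trans; [apply (RInt_le _ g u w); [lra | | | intros x Hx; apply Hbound; lra] |].
  - apply ex_RInt_continuous_R; intros x; apply (continuous_comp f Rabs); auto.
    apply continuous_Rabs.
  - now apply ex_RInt_continuous_R.
  - rewrite (is_RInt_unique g u w _ (is_RInt_derive _ g u w (fun x _ => Hg x) (fun x _ => Hgc x))).
    unfold minus, plus, opp; simpl.
    assert (0 <= C / b) by (apply Rdiv_le_0_compat; lra).
    pose proof (exp_pos (- (b * w))); nra.
Qed.

Lemma ex_RInt_gen_exp_decay (f : R -> R) (C b X : R) :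
  0 < b -> (forall x, continuous f x) ->
  (forall x, X <= x -> Rabs (f x) <= C * exp (- (b * x))) ->
  ex_RInt_gen f (at_point 0) (Rbar_locally p_infty).
Proof.
  intros Hb Hc Hbound.
  assert (HC : 0 <= C) by (pose proof (Hbound X (Rle_refl X)); pose proof (Rabs_pos (f X));
                           pose proof (exp_pos (- (b * X))); nra).
  apply ex_RInt_gen_of_tail_small; auto.
  intros eps; pose proof (cond_pos eps) as Heps.
  assert (Hbbe : 0 < b * b * eps) by (apply Rmult_lt_0_compat; [nra | lra]).
  set (T := Rmax X 0 + C / (b * b * eps)).
  assert (HT : 0 <= C / (b * b * eps)) by (apply Rdiv_le_0_compat; lra).
  exists (T + 1); intros u w Hu Huw.
  pose proof (Rmax_l X 0); pose proof (Rmax_r X 0).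
  assert (Hu0 : 0 < u) by (unfold T in Hu; lra).
  eapply Rle_lt_trans; [apply (RInt_exp_decay_bound f C b X); auto; unfold T in Hu; lra |].
  assert (Hexp : exp (- (b * u)) <= / (1 + b * u)).
  { rewrite exp_Ropp; apply Rinv_le_contravar; [nra | apply exp_ineq1_le]. }
  assert (HCu : C < b * b * eps * u).
  { assert (Hr : C / (b * b * eps) < u) by (unfold T in Hu; lra).
    apply (Rmult_lt_compat_l (b * b * eps)) in Hr; [| lra].
    now replace (b * b * eps * (C / (b * b * eps))) with C in Hr by (field; lra). }
  apply Rle_lt_trans with (C / b * / (1 + b * u)).
  - apply Rmult_le_compat_l; [apply Rdiv_le_0_compat |]; lra.
  - apply (Rmult_lt_reg_r (b * (1 + b * u))); [nra |].
    replace (C / b * / (1 + b * u) * (b * (1 + b * u))) with C by (field; nra). nra.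
Qed.

Lemma ex_RInt_gen_lower_bound_eq0 (g : R -> R) (w : R) :
  ex_RInt_gen g (at_point 0) (Rbar_locally p_infty) ->
  (forall x, 0 < x -> Rabs w <= g x) -> w = 0.
Proof.
  intros [l Hl] Hbound.
  destruct (Hl (ball l (mkposreal 1 Rlt_0_1))) as [P Q HP [M HM] Hint]; [apply locally_ball |].
  destruct (Req_dec w 0) as [| Hw]; auto; exfalso.
  apply Rabs_pos_lt in Hw.
  set (t := Rmax M 0 + 1 + (Rabs l + 1) / Rabs w).
  assert (Ht : 0 <= (Rabs l + 1) / Rabs w)
    by (apply Rdiv_le_0_compat; [pose proof (Rabs_pos l) |]; lra).
  pose proof (Rmax_l M 0); pose proof (Rmax_r M 0).
  destruct (Hint 0 t HP (HM t ltac:(unfold t; lra))) as [I [HI Hball]]; simpl in HI.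
  assert ((t - 0) * Rabs w <= I).
  { apply (is_RInt_le (fun _ => Rabs w) g 0 t); auto; [unfold t; lra | |].
    - apply (is_RInt_const (V := R_NormedModule)).
    - intros x Hx; apply Hbound; lra. }
  assert (t * Rabs w = (Rmax M 0 + 1) * Rabs w + (Rabs l + 1)) by (unfold t; field; lra).
  change (Rabs (I - l) < 1) in Hball; apply Rabs_lt_between in Hball.
  pose proof (Rle_abs l); nra.
Qed.

Lemma continuous_eq_at_0 (f g : R -> R) :
  continuous f 0 -> continuous g 0 -> (forall x, 0 < x -> f x = g x) -> f 0 = g 0.
Proof.
  intros Hf Hg Heq.
  assert (Hle : filter_le (at_right 0) (locally 0))
    by (intros P HP; unfold at_right, within; apply filter_imp with P; auto).
  apply (filterlim_locally_unique (F := at_right 0) g).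
  - apply (filterlim_ext_loc f g); [| now apply (filterlim_filter_le_1 f Hle)].
    exists (mkposreal 1 Rlt_0_1); intros y _ Hy; now apply Heq.
  - now apply (filterlim_filter_le_1 g Hle).
Qed.

Lemma ex_RInt_gen_Rplus (f g : R -> R) :
  ex_RInt_gen f (at_point 0) (Rbar_locally p_infty) ->
  ex_RInt_gen g (at_point 0) (Rbar_locally p_infty) ->
  ex_RInt_gen (fun x => f x + g x) (at_point 0) (Rbar_locally p_infty).
Proof.
  intros [lf Hf] [lg Hg]; exists (plus lf lg).
  now apply (is_RInt_gen_plus (V := R_NormedModule)).
Qed.

(** * The decaying solution and its translates *)

Definition exp_decay (k : R) (w : R -> R) : Prop :=
  (forall x, continuous w x) /\
  exists C X, forall x, X <= x -> Rabs (w x) <= C * exp (- (k * x)).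

Lemma continuous_scal_shift (w : R -> R) (c s x : R) :
  continuous w (x + s) -> continuous (fun t => c * w (t + s)) x.
Proof.
  intros Hw.
  apply (continuous_mult (K := R_AbsRing) (fun _ => c)); [apply continuous_const |].
  apply (continuous_comp (fun t => t + s) w x); auto.
  apply (continuous_plus (K := R_AbsRing) (V := R_NormedModule) (fun t => t) (fun _ => s)).
  - apply continuous_id.
  - apply continuous_const.
Qed.

Lemma is_derive_shift (w : R -> R) (s x d : R) :
  is_derive w (x + s) d -> is_derive (fun t => w (t + s)) x d.
Proof.
  intros Hw; replace d with (1 * d) by ring.
  apply (is_derive_comp w (fun t => t + s) x d 1 Hw); auto_derive; auto; ring.
Qed.

Lemma is_derive_scal_shift (w : R -> R) (c s x d : R) :
  is_derive w (x + s) d -> is_derive (fun t => c * w (t + s)) x (c * d).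
Proof. intros Hw; now apply is_derive_scal, is_derive_shift. Qed.

Lemma exp_decay_sqr_shift_integrable (k c s : R) (w : R -> R) :
  0 < k -> exp_decay k w ->
  ex_RInt_gen (fun x => (c * w (x + s)) ^ 2) (at_point 0) (Rbar_locally p_infty).
Proof.
  intros Hk [Hc [C [X Hbound]]].
  apply (ex_RInt_gen_exp_decay _ (c ^ 2 * C ^ 2 * exp (- (2 * k * s))) (2 * k) (X - s)); [lra | |].
  - intros x; apply (continuous_ext (T := R_UniformSpace) (U := R_UniformSpace)
      (fun t => (c * w (t + s)) * (c * w (t + s)))); [intros; apply Rsqr_pow2 |].
    apply (continuous_mult (K := R_AbsRing)); apply continuous_scal_shift, Hc.
  - intros x Hx.
    specialize (Hbound (x + s) ltac:(lra)).
    rewrite Rabs_right by (apply Rle_ge, pow2_ge_0).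
    assert (Hsq : w (x + s) ^ 2 <= (C * exp (- (k * (x + s)))) ^ 2).
    { rewrite <- (pow2_abs (w (x + s))); apply pow_incr; auto using Rabs_pos. }
    assert (Hexp : exp (- (k * (x + s))) ^ 2 = exp (- (2 * k * s)) * exp (- (2 * k * x))).
    { simpl; rewrite Rmult_1_r, <- !exp_plus; f_equal; ring. }
    replace ((c * w (x + s)) ^ 2) with (c ^ 2 * w (x + s) ^ 2) by ring.
    replace (c ^ 2 * C ^ 2 * exp (- (2 * k * s)) * exp (- (2 * k * x)))
      with (c ^ 2 * (C * exp (- (k * (x + s)))) ^ 2) by (rewrite Rpow_mult_distr, Hexp; ring).
    apply Rmult_le_compat_l; [apply pow2_ge_0 | exact Hsq].
Qed.

Section DecayingSolution.

Variables (v Q : R -> R) (k M : R).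
Hypothesis k_pos : 0 < k.
Hypothesis v_derive : forall x, is_derive v x (Derive v x).
Hypothesis v_ode : forall x, is_derive (Derive v) x (Q x * v x).
Hypothesis Q_bounded : forall x, Rabs (Q x) <= M.
Hypothesis Q_continuous : forall x, continuous Q x.
Hypothesis v_asymptotics : is_lim (fun x => v x * exp (k * x)) p_infty 1.

Let v_continuous x : continuous v x.
Proof. apply continuous_of_ex_derive; eexists; apply v_derive. Qed.

Let v'_continuous x : continuous (Derive v) x.
Proof. apply continuous_of_ex_derive; eexists; apply v_ode. Qed.

Lemma decaying_solution_eventually : exists X, forall x, X <= x ->
  0 < v x /\ Rabs (v x) <= 2 * exp (- (k * x)).
Proof.
  destruct (proj2 (is_lim_spec _ _ _) v_asymptotics (mkposreal (1 / 2) ltac:(lra))) as [X HX].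
  exists (X + 1); intros x Hx.
  specialize (HX x ltac:(lra)); simpl in HX; apply Rabs_lt_between in HX.
  pose proof (exp_pos (k * x)); pose proof (exp_pos (- (k * x))).
  assert (Hv : v x = v x * exp (k * x) * exp (- (k * x)))
    by (rewrite Rmult_assoc, <- exp_plus, Rplus_opp_r, exp_0; ring).
  assert (0 < v x) by nra.
  split; [lra |]; rewrite Rabs_right by lra; nra.
Qed.

(* v'(x) = (v(x+1) - v(x)) - (v'(c) - v'(x)) for some c in [x, x+1], and v'' = Q v. *)
Lemma decaying_solution_derive_bound : exists X, forall x, X <= x ->
  Rabs (Derive v x) <= (4 + 2 * M) * exp (- (k * x)).
Proof.
  destruct decaying_solution_eventually as [X HX].
  exists X; intros x Hx.
  assert (Hv : forall t, x <= t -> Rabs (v t) <= 2 * exp (- (k * x))).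
  { intros t Ht; eapply Rle_trans; [apply HX; lra |].
    apply Rmult_le_compat_l; [lra |].
    destruct (Req_dec t x) as [-> | Hne]; [lra |]; left; apply exp_increasing; nra. }
  destruct (MVT_gen v x (x + 1) (Derive v)) as [c [Hc Hmvt]];
    rewrite ?Rmin_left, ?Rmax_right in * by lra.
  { intros; apply v_derive. }
  { intros t _; apply (continuity_pt_of_is_derive _ _ _ (v_derive t)). }
  destruct (MVT_gen (Derive v) x c (fun t => Q t * v t)) as [d [Hd Hmvt']];
    rewrite ?Rmin_left, ?Rmax_right in * by lra.
  { intros; apply v_ode. }
  { intros t _; apply (continuity_pt_of_is_derive _ _ _ (v_ode t)). }
  cbv beta in Hmvt'.
  assert (Derive v c = v (x + 1) - v x) by (rewrite Hmvt; ring).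
  assert (Hdv : Derive v x = (v (x + 1) - v x) - Q d * v d * (c - x)) by lra.
  assert (HQv : Rabs (Q d * v d * (c - x)) <= M * (2 * exp (- (k * x)))).
  { rewrite !Rabs_mult, (Rabs_right (c - x)) by lra.
    pose proof (Rabs_pos (Q d)); pose proof (Rabs_pos (v d)).
    apply Rle_trans with (Rabs (Q d) * Rabs (v d) * 1); [apply Rmult_le_compat_l; nra |].
    rewrite Rmult_1_r; apply Rmult_le_compat; auto; apply Hv; lra. }
  pose proof (Hv (x + 1) ltac:(lra)); pose proof (Hv x ltac:(lra)).
  rewrite Hdv; unfold Rminus.
  eapply Rle_trans; [apply Rabs_triang |]; rewrite Rabs_Ropp.
  eapply Rle_trans; [apply Rplus_le_compat_r, Rabs_triang |]; rewrite Rabs_Ropp.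
  unfold Rminus in HQv; lra.
Qed.

Lemma decaying_solution_derive_neq0 (s : R) : v s = 0 -> Derive v s <> 0.
Proof.
  intros Hs Hs'.
  destruct decaying_solution_eventually as [X HX].
  assert (Hzero := linear_ode2_zero (Rmin s X - 1) M Q v (Derive v)
    (fun x _ => v_derive x) (fun x _ => v_ode x) (fun x _ => Q_bounded x) s).
  pose proof (Rmin_l s X); pose proof (Rmin_r s X).
  assert (v X = 0) by (apply Hzero; auto; lra).
  destruct (HX X (Rle_refl X)); lra.
Qed.

Lemma exp_decay_solution : exp_decay k v.
Proof.
  split; [exact v_continuous |].
  destruct decaying_solution_eventually as [X HX].
  exists 2, X; intros x Hx; apply HX, Hx.
Qed.

Lemma exp_decay_solution_derive : exp_decay k (Derive v).
Proof.
  split; [exact v'_continuous |].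
  destruct decaying_solution_derive_bound as [X HX].
  now exists (4 + 2 * M), X.
Qed.

Lemma exp_decay_solution_derive2 : exp_decay k (fun x => Q x * v x).
Proof.
  split; [intros x; apply (continuous_mult (K := R_AbsRing)); auto |].
  destruct decaying_solution_eventually as [X HX].
  exists (M * 2), X; intros x Hx; rewrite Rabs_mult, Rmult_assoc.
  apply Rmult_le_compat; auto using Rabs_pos; apply HX, Hx.
Qed.

Section Shift.

Variables (c s : R).

Let vs := fun x => c * v (x + s).

Lemma Derive_shift x : Derive vs x = c * Derive v (x + s).
Proof. apply is_derive_unique, is_derive_scal_shift, v_derive. Qed.

Lemma is_derive_Derive_shift x : is_derive (Derive vs) x (c * (Q (x + s) * v (x + s))).
Proof.
  apply (is_derive_ext (fun t => c * Derive v (t + s))); [intros; symmetry; apply Derive_shift |].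
  apply is_derive_scal_shift, v_ode.
Qed.

Lemma Derive2_shift x : Derive (Derive vs) x = c * (Q (x + s) * v (x + s)).
Proof. apply is_derive_unique, is_derive_Derive_shift. Qed.

Lemma H2_halfline_shift : H2_halfline vs.
Proof.
  repeat split.
  - eexists; apply is_derive_scal_shift, v_derive.
  - eexists; apply is_derive_Derive_shift.
  - exact (exp_decay_sqr_shift_integrable k c s v k_pos exp_decay_solution).
  - apply (ex_RInt_gen_ext_eq (fun x => (c * Derive v (x + s)) ^ 2));
      [intros; now rewrite Derive_shift |].
    exact (exp_decay_sqr_shift_integrable k c s _ k_pos exp_decay_solution_derive).
  - apply (ex_RInt_gen_ext_eq (fun x => (c * (fun y => Q y * v y) (x + s)) ^ 2));
      [intros; now rewrite Derive2_shift |].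
    exact (exp_decay_sqr_shift_integrable k c s _ k_pos exp_decay_solution_derive2).
Qed.

End Shift.

Section HalflineSolution.

Variables (s : R) (U : R -> R).
Hypothesis U_H2 : H2_halfline U.
Hypothesis U_ode : forall x, 0 < x -> Derive (Derive U) x = Q (x + s) * U x.

Let U_derive x : 0 <= x -> is_derive U x (Derive U x).
Proof.
  intros Hx; destruct (proj1 U_H2 x Hx) as [[d Hd] _].
  now rewrite (is_derive_unique U x d Hd).
Qed.

Let U_derive2 x : 0 < x -> is_derive (Derive U) x (Q (x + s) * U x).
Proof.
  intros Hx; destruct (proj1 U_H2 x ltac:(lra)) as [_ [d Hd]].
  now rewrite <- U_ode, (is_derive_unique _ x d Hd).
Qed.

Let vs_derive x : is_derive (fun t => v (t + s)) x (Derive v (x + s)).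
Proof. apply is_derive_shift, v_derive. Qed.

Let vs_derive2 x :
  is_derive (fun t => Derive v (t + s)) x (Q (x + s) * v (x + s)).
Proof. apply is_derive_shift, v_ode. Qed.

(* The Wronskian of two square-integrable solutions is a constant bounded by an integrable
   function, hence zero. *)
Lemma wronskian_shift_eq0 x : 0 < x ->
  U x * Derive v (x + s) - Derive U x * v (x + s) = 0.
Proof.
  intros Hx.
  destruct U_H2 as [_ [HU [HU' _]]].
  apply (ex_RInt_gen_lower_bound_eq0
    (fun t => (U t ^ 2 + Derive U t ^ 2) + ((1 * v (t + s)) ^ 2 + (1 * Derive v (t + s)) ^ 2))).
  - apply ex_RInt_gen_Rplus; apply ex_RInt_gen_Rplus; auto.
    + exact (exp_decay_sqr_shift_integrable k 1 s v k_pos exp_decay_solution).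
    + exact (exp_decay_sqr_shift_integrable k 1 s _ k_pos exp_decay_solution_derive).
  - intros t Ht.
    rewrite (wronskian_constant 0 (fun t => Q (t + s)) U (Derive U) (fun t => v (t + s))
               (fun t => Derive v (t + s)) (fun t Ht => U_derive t ltac:(lra)) U_derive2
               (fun t _ => vs_derive t) (fun t _ => vs_derive2 t) x t Hx Ht).
    pose proof (two_abs_mult_le (U t) (Derive v (t + s))).
    pose proof (two_abs_mult_le (Derive U t) (v (t + s))).
    pose proof (Rabs_triang (U t * Derive v (t + s)) (- (Derive U t * v (t + s)))).
    rewrite Rabs_Ropp in *; unfold Rminus; nra.
Qed.

(* U - c v(. + s) has zero Cauchy data at x1 by the vanishing of the Wronskian. *)
Lemma H2_solution_proportional_pos (x1 : R) : 0 < x1 -> v (x1 + s) <> 0 ->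
  forall x, 0 < x -> U x = U x1 / v (x1 + s) * v (x + s).
Proof.
  intros Hx1 Hv1 x Hx; set (c := U x1 / v (x1 + s)).
  enough (U x - c * v (x + s) = 0) by lra.
  apply (linear_ode2_zero 0 M (fun t => Q (t + s)) (fun t => U t - c * v (t + s))
           (fun t => Derive U t - c * Derive v (t + s))) with x1; auto.
  - intros t Ht; apply (is_derive_minus (K := R_AbsRing) U (fun t => c * v (t + s))).
    + apply U_derive; lra.
    + now apply is_derive_scal.
  - intros t Ht.
    replace (Q (t + s) * (U t - c * v (t + s)))
      with (Q (t + s) * U t - c * (Q (t + s) * v (t + s))) by ring.
    apply (is_derive_minus (K := R_AbsRing) (Derive U) (fun t => c * Derive v (t + s))).
    + now apply U_derive2.
    + now apply is_derive_scal.
  - unfold c; field; auto.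
  - pose proof (wronskian_shift_eq0 x1 Hx1); unfold c.
    apply (Rmult_eq_reg_r (v (x1 + s))); auto; field_simplify; auto; lra.
Qed.

Lemma H2_solution_proportional (x1 : R) : 0 < x1 -> v (x1 + s) <> 0 ->
  (forall x, 0 <= x -> U x = U x1 / v (x1 + s) * v (x + s)) /\
  Derive U 0 = U x1 / v (x1 + s) * Derive v s.
Proof.
  intros Hx1 Hv1.
  set (c := U x1 / v (x1 + s)).
  assert (Hprop := H2_solution_proportional_pos x1 Hx1 Hv1); fold c in Hprop.
  split.
  - intros x Hx; destruct (Req_dec x 0) as [-> | Hx0]; [| apply Hprop; lra].
    apply (continuous_eq_at_0 U (fun t => c * v (t + s))); auto.
    + apply continuous_of_ex_derive; eexists; apply U_derive; lra.
    + apply continuous_of_ex_derive; eexists; now apply is_derive_scal.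
  - rewrite <- (Rplus_0_l s).
    apply (continuous_eq_at_0 (Derive U) (fun t => c * Derive v (t + s))).
    + apply continuous_of_ex_derive, (proj2 (proj1 U_H2 0 (Rle_refl 0))).
    + apply continuous_of_ex_derive; eexists; now apply is_derive_scal.
    + intros x Hx; apply is_derive_unique.
      apply (is_derive_ext_loc (fun t => c * v (t + s))); [| now apply is_derive_scal].
      apply (locally_open (fun t => 0 < t)); [apply open_gt | | exact Hx].
      intros t Ht; symmetry; now apply Hprop.
Qed.

End HalflineSolution.

End DecayingSolution.

(** * Bases of coefficient vectors *)

Lemma rsum_ext (f g : nat -> R) (n : nat) :
  (forall j, (j < n)%nat -> f j = g j) -> rsum f n = rsum g n.
Proof.
  induction n as [| n IH]; intros H; simpl; auto.
  rewrite IH, H; auto; intros; apply H; lia.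
Qed.

Lemma rsum_zero (f : nat -> R) (n : nat) :
  (forall j, (j < n)%nat -> f j = 0) -> rsum f n = 0.
Proof.
  intros H; rewrite (rsum_ext f (fun _ => 0)) by auto.
  clear H; induction n; simpl; [| rewrite IHn]; ring.
Qed.

Lemma rsum_scal_l (f : nat -> R) (c : R) (n : nat) :
  rsum (fun j => c * f j) n = c * rsum f n.
Proof. induction n; simpl; [ring | rewrite IHn; ring]. Qed.

Lemma rsum_scal_r (f : nat -> R) (c : R) (n : nat) :
  rsum (fun j => f j * c) n = rsum f n * c.
Proof. induction n; simpl; [ring | rewrite IHn; ring]. Qed.

Lemma rsum_minus (f g : nat -> R) (n : nat) :
  rsum (fun j => f j - g j) n = rsum f n - rsum g n.
Proof. induction n; simpl; [ring | rewrite IHn; ring]. Qed.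

Lemma rsum_add (f : nat -> R) (n1 n2 : nat) :
  rsum f (n1 + n2) = rsum f n1 + rsum (fun i => f (n1 + i)%nat) n2.
Proof.
  induction n2 as [| n2 IH]; simpl; [rewrite Nat.add_0_r; ring |].
  rewrite Nat.add_succ_r; simpl; rewrite IH; ring.
Qed.

Lemma rsum_pos (f : nat -> R) (n : nat) :
  (0 < n)%nat -> (forall j, (j < n)%nat -> 0 < f j) -> 0 < rsum f n.
Proof.
  induction n as [| n IH]; intros Hn H; [lia | simpl].
  destruct n; [simpl; specialize (H 0%nat ltac:(lia)); lra |].
  assert (0 < rsum f (S n)) by (apply IH; [lia | intros; apply H; lia]).
  specialize (H (S n) ltac:(lia)); lra.
Qed.

Lemma rsum_delta (f : nat -> R) (i n : nat) : (i < n)%nat ->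
  rsum (fun j => if (j =? i)%nat then f j else 0) n = f i.
Proof.
  induction n as [| n IH]; intros Hi; [lia | simpl].
  destruct (Nat.eqb_spec n i) as [-> | Hne].
  - rewrite rsum_zero; [ring |]; intros j Hj; destruct (Nat.eqb_spec j i); [lia | auto].
  - rewrite IH by lia; ring.
Qed.

Lemma rsum_support (f : nat -> R) (lo hi n : nat) :
  (lo <= hi <= n)%nat -> (forall j, (j < n)%nat -> ~ (lo <= j < hi)%nat -> f j = 0) ->
  rsum f n = rsum (fun i => f (lo + i)%nat) (hi - lo).
Proof.
  intros Hle Hf.
  replace n with (lo + (hi - lo) + (n - hi))%nat at 1 by lia.
  rewrite !rsum_add, (rsum_zero f lo), (rsum_zero _ (n - hi)); try ring;
    intros j Hj; apply Hf; lia.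
Qed.

(* Coefficient vectors nat -> R are compared on the coordinates j < n only. *)
Definition basis_of (n m : nat) (P : (nat -> R) -> Prop) (F : nat -> nat -> R) : Prop :=
  (forall k, (k < m)%nat -> P (F k)) /\
  (forall d, (forall j, (j < n)%nat -> rsum (fun k => d k * F k j) m = 0) ->
     forall k, (k < m)%nat -> d k = 0) /\
  (forall c, P c -> exists d, forall j, (j < n)%nat -> c j = rsum (fun k => d k * F k j) m).

Lemma basis_of_equiv (n m : nat) (P P' : (nat -> R) -> Prop) (F : nat -> nat -> R) :
  (forall c, P c <-> P' c) -> basis_of n m P F -> basis_of n m P' F.
Proof.
  intros HP [Hmem [Hind Hspan]]; split; [| split]; auto.
  - intros k Hk; apply HP; auto.
  - intros c Hc; apply Hspan, HP, Hc.
Qed.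

Lemma basis_of_trivial (n : nat) (P : (nat -> R) -> Prop) (F : nat -> nat -> R) :
  (forall c, P c -> forall j, (j < n)%nat -> c j = 0) -> basis_of n 0 P F.
Proof.
  intros H0; split; [| split]; try (intros; lia).
  intros c Hc; exists (fun _ => 0); intros j Hj; simpl; now apply H0.
Qed.

Lemma basis_of_line (n j0 : nat) (w : nat -> R) : (j0 < n)%nat -> w j0 <> 0 ->
  basis_of n 1 (fun c => exists g, forall j, (j < n)%nat -> c j = g * w j) (fun _ => w).
Proof.
  intros Hj0 Hw; split; [| split].
  - intros k _; exists 1; intros; ring.
  - intros d Hd k Hk; specialize (Hd j0 Hj0); simpl in Hd.
    assert (d 0%nat * w j0 = 0) by lra.
    replace k with 0%nat by lia; destruct (Rmult_integral _ _ H); auto; contradiction.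
  - intros c [g Hg]; exists (fun _ => g); intros j Hj; simpl; rewrite Hg by auto; ring.
Qed.

Definition hyperplane_vec (lo hi : nat) (u : nat -> R) (k j : nat) : R :=
  (if (j =? lo + k)%nat then / u j else 0) - (if (j =? hi - 1)%nat then / u j else 0).

Section Hyperplane.

Variables (n lo hi : nat) (u : nat -> R).
Hypothesis lo_hi_n : (lo < hi <= n)%nat.
Hypothesis u_neq0 : forall j, (lo <= j < hi)%nat -> u j <> 0.

Let supported (c : nat -> R) : Prop :=
  forall j, (j < n)%nat -> ~ (lo <= j < hi)%nat -> c j = 0.

Lemma hyperplane_vec_mem (k : nat) : (k < hi - lo - 1)%nat ->
  supported (hyperplane_vec lo hi u k) /\ rsum (fun j => u j * hyperplane_vec lo hi u k j) n = 0.
Proof.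
  intros Hk; unfold hyperplane_vec; split.
  - intros j Hj Hout.
    destruct (Nat.eqb_spec j (lo + k)); [lia |]; destruct (Nat.eqb_spec j (hi - 1)); [lia |]; ring.
  - rewrite (rsum_ext _ (fun j => (if (j =? lo + k)%nat then 1 else 0)
                                - (if (j =? hi - 1)%nat then 1 else 0))).
    + rewrite rsum_minus, !rsum_delta by lia; ring.
    + intros j Hj; destruct (Nat.eqb_spec j (lo + k)); destruct (Nat.eqb_spec j (hi - 1));
        try lia; try ring; field; apply u_neq0; lia.
Qed.

Lemma hyperplane_vec_independent (d : nat -> R) :
  (forall j, (j < n)%nat -> rsum (fun k => d k * hyperplane_vec lo hi u k j) (hi - lo - 1) = 0) ->
  forall k, (k < hi - lo - 1)%nat -> d k = 0.
Proof.
  intros Hd k Hk; specialize (Hd (lo + k)%nat ltac:(lia)); unfold hyperplane_vec in Hd.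
  rewrite (rsum_ext _ (fun i => if (i =? k)%nat then d i * / u (lo + k)%nat else 0)) in Hd.
  2: { intros i Hi; destruct (Nat.eqb_spec (lo + k) (hi - 1)); [lia |].
       destruct (Nat.eqb_spec (lo + k) (lo + i)), (Nat.eqb_spec i k); try lia; subst; ring. }
  rewrite rsum_delta in Hd by auto.
  destruct (Rmult_integral _ _ Hd) as [| Hinv]; auto.
  exfalso; revert Hinv; apply Rinv_neq_0_compat, u_neq0; lia.
Qed.

(* The coordinates of c are d_k = u_(lo+k) c_(lo+k); the last coordinate c_(hi-1) is recovered
   from the orthogonality to u. *)
Lemma hyperplane_vec_span (c : nat -> R) :
  supported c -> rsum (fun j => u j * c j) n = 0 ->
  forall j, (j < n)%nat ->
    c j = rsum (fun k => u (lo + k)%nat * c (lo + k)%nat * hyperplane_vec lo hi u k j)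
            (hi - lo - 1).
Proof.
  intros Hsupp Hsum j Hj; unfold hyperplane_vec.
  rewrite (rsum_support _ lo hi n) in Hsum by (auto; lia || (intros; rewrite Hsupp; auto; ring)).
  replace (hi - lo)%nat with (S (hi - lo - 1)) in Hsum by lia; simpl in Hsum.
  replace (lo + (hi - lo - 1))%nat with (hi - 1)%nat in Hsum by lia.
  destruct (Nat.eqb_spec j (hi - 1)) as [-> | Hlast].
  - rewrite (rsum_ext _ (fun k => u (lo + k)%nat * c (lo + k)%nat * - / u (hi - 1)%nat)).
    2: { intros k Hk; destruct (Nat.eqb_spec (hi - 1) (lo + k)); [lia | ring]. }
    rewrite rsum_scal_r.
    replace (rsum _ (hi - lo - 1)) with (- (u (hi - 1)%nat * c (hi - 1)%nat)) by lra.
    field; apply u_neq0; lia.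
  - assert (Hin : (lo <= j < hi)%nat \/ ~ (lo <= j < hi)%nat) by lia.
    destruct Hin as [Hin | Hout].
    + rewrite (rsum_ext _ (fun k => if (k =? j - lo)%nat
                                    then u (lo + k)%nat * c (lo + k)%nat * / u j else 0)).
      * rewrite rsum_delta by lia.
        replace (lo + (j - lo))%nat with j by lia; field; apply u_neq0; lia.
      * intros k Hk; destruct (Nat.eqb_spec j (lo + k)), (Nat.eqb_spec k (j - lo));
          try lia; subst; ring.
    + rewrite Hsupp, rsum_zero; auto.
      intros k Hk; destruct (Nat.eqb_spec j (lo + k)); [lia | ring].
Qed.

Lemma basis_of_hyperplane :
  basis_of n (hi - lo - 1) (fun c => supported c /\ rsum (fun j => u j * c j) n = 0)
    (hyperplane_vec lo hi u).
Proof.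
  split; [| split].
  - apply hyperplane_vec_mem.
  - apply hyperplane_vec_independent.
  - intros c [Hsupp Hsum]; exists (fun k => u (lo + k)%nat * c (lo + k)%nat).
    now apply hyperplane_vec_span.
Qed.

End Hyperplane.

(** * Vertex conditions *)

Definition edge_sel (K : nat) (x y : R) (j : nat) : R := if (j <? K)%nat then x else y.

Lemma edge_sel_lt (K : nat) (x y : R) (j : nat) : (j < K)%nat -> edge_sel K x y j = x.
Proof. intros H; unfold edge_sel; destruct (Nat.ltb_spec j K); auto; lia. Qed.

Lemma edge_sel_ge (K : nat) (x y : R) (j : nat) : (K <= j)%nat -> edge_sel K x y j = y.
Proof. intros H; unfold edge_sel; destruct (Nat.ltb_spec j K); auto; lia. Qed.

Lemma edge_sel_map (f : R -> R) (K : nat) (x y : R) (j : nat) :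
  f (edge_sel K x y j) = edge_sel K (f x) (f y) j.
Proof. unfold edge_sel; now destruct (j <? K)%nat. Qed.

Lemma rsum_edge_sel (f : nat -> R) (N K : nat) (x y : R) : (K <= N)%nat ->
  rsum (fun j => edge_sel K x y j * f j) N
  = x * rsum f K + y * rsum (fun i => f (K + i)%nat) (N - K).
Proof.
  intros HK; replace N with (K + (N - K))%nat at 1 by lia.
  rewrite rsum_add, <- !rsum_scal_l; f_equal; apply rsum_ext; intros j Hj.
  - now rewrite edge_sel_lt.
  - now rewrite edge_sel_ge by lia.
Qed.

(* The vertex conditions for the edge profiles c_j v(x +/- a): vA, dA are the value and
   slope of the profile on the edges j < K, vB, dB on the others, and b_j = alpha_j^(-1/p). *)
Definition vertex_continuity (N K : nat) (b : nat -> R) (vA vB : R) (c : nat -> R) : Prop :=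
  forall i j, (i < N)%nat -> (j < N)%nat ->
    / b i * (c i * edge_sel K vA vB i) = / b j * (c j * edge_sel K vA vB j).

Definition vertex_kirchhoff (N K : nat) (b : nat -> R) (dA dB : R) (c : nat -> R) : Prop :=
  rsum (fun j => b j * edge_sel K dA dB j * c j) N = 0.

Definition vertex_multiplicity (N K : nat) (vA vB dA dB : R) : nat :=
  ((if Req_EM_T vA 0 then (K - 1)%nat else 0%nat)
   + (if Req_EM_T vB 0 then (N - K - 1)%nat else 0%nat)
   + (if Req_EM_T (vB * dA + vA * dB) 0 then 1%nat else 0%nat))%nat.

Section Vertex.

Variables (N K : nat) (b : nat -> R).
Hypothesis K_pos : (1 <= K)%nat.
Hypothesis K_lt_N : (K <= N - 1)%nat.
Hypothesis b_pos : forall j, (j < N)%nat -> 0 < b j.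
Hypothesis b_balance : rsum (fun j => b j ^ 2) K = rsum (fun i => b (K + i)%nat ^ 2) (N - K).

Let b_neq0 j : (j < N)%nat -> b j <> 0.
Proof. intros Hj; specialize (b_pos j Hj); lra. Qed.

Lemma vertex_continuity_regular (vA vB : R) (c : nat -> R) : vA <> 0 -> vB <> 0 ->
  vertex_continuity N K b vA vB c <->
  exists g, forall j, (j < N)%nat -> c j = g * (b j / edge_sel K vA vB j).
Proof.
  intros HvA HvB.
  assert (Hsel : forall j, edge_sel K vA vB j <> 0)
    by (intros; unfold edge_sel; now destruct (j <? K)%nat).
  split.
  - intros Hc; exists (/ b 0%nat * (c 0%nat * vA)); intros j Hj.
    assert (H0 := Hc 0%nat j ltac:(lia) Hj); rewrite edge_sel_lt in H0 by lia.
    rewrite H0; field; auto.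
  - intros [g Hg] i j Hi Hj; rewrite Hg, Hg by auto.
    field; auto.
Qed.

Lemma vertex_kirchhoff_regular (vA vB dA dB g : R) (c : nat -> R) : vA <> 0 -> vB <> 0 ->
  (forall j, (j < N)%nat -> c j = g * (b j / edge_sel K vA vB j)) ->
  vertex_kirchhoff N K b dA dB c <-> g * (vB * dA + vA * dB) = 0.
Proof.
  intros HvA HvB Hc; unfold vertex_kirchhoff.
  set (S := rsum (fun j => b j ^ 2) K).
  assert (HS : 0 < S)
    by (apply rsum_pos; [lia | intros j Hj; specialize (b_pos j ltac:(lia)); nra]).
  rewrite (rsum_ext _ (fun j => edge_sel K (g * dA / vA) (g * dB / vB) j * b j ^ 2))
    by (intros j Hj; rewrite Hc by auto; unfold edge_sel; destruct (j <? K)%nat; field; auto).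
  rewrite rsum_edge_sel, <- b_balance by lia; fold S.
  replace (g * dA / vA * S + g * dB / vB * S)
    with (g * (vB * dA + vA * dB) * (S / (vA * vB))) by (field; auto).
  split; [| intros ->; ring].
  intros H; destruct (Rmult_integral _ _ H) as [| HS0]; auto.
  exfalso; revert HS0; apply Rmult_integral_contrapositive; split; [lra |].
  apply Rinv_neq_0_compat, Rmult_integral_contrapositive; auto.
Qed.

Lemma vertex_continuity_left_node (vB : R) (c : nat -> R) : vB <> 0 ->
  vertex_continuity N K b 0 vB c <-> forall j, (j < N)%nat -> (K <= j)%nat -> c j = 0.
Proof.
  intros HvB; split.
  - intros Hc j Hj HKj; specialize (Hc 0%nat j ltac:(lia) Hj).
    rewrite edge_sel_lt, edge_sel_ge in Hc by lia.
    assert (Hprod : / b j * c j * vB = 0) by lra.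
    destruct (Rmult_integral _ _ Hprod) as [H | H]; [| contradiction].
    destruct (Rmult_integral _ _ H) as [H' | H']; auto.
    exfalso; revert H'; apply Rinv_neq_0_compat, b_neq0, Hj.
  - intros Hc i j Hi Hj.
    assert (Hz : forall l, (l < N)%nat -> / b l * (c l * edge_sel K 0 vB l) = 0).
    { intros l Hl; destruct (Nat.lt_ge_cases l K).
      - rewrite edge_sel_lt by auto; ring.
      - rewrite Hc by auto; ring. }
    now rewrite !Hz.
Qed.

Lemma vertex_continuity_right_node (vA : R) (c : nat -> R) : vA <> 0 ->
  vertex_continuity N K b vA 0 c <-> forall j, (j < K)%nat -> c j = 0.
Proof.
  intros HvA; split.
  - intros Hc j HjK; specialize (Hc j K ltac:(lia) ltac:(lia)).
    rewrite edge_sel_lt, edge_sel_ge in Hc by lia.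
    assert (Hprod : / b j * c j * vA = 0) by lra.
    destruct (Rmult_integral _ _ Hprod) as [H | H]; [| contradiction].
    destruct (Rmult_integral _ _ H) as [H' | H']; auto.
    exfalso; revert H'; apply Rinv_neq_0_compat, b_neq0; lia.
  - intros Hc i j Hi Hj.
    assert (Hz : forall l, (l < N)%nat -> / b l * (c l * edge_sel K vA 0 l) = 0).
    { intros l Hl; destruct (Nat.lt_ge_cases l K).
      - rewrite Hc by auto; ring.
      - rewrite edge_sel_ge by auto; ring. }
    now rewrite !Hz.
Qed.

Lemma vertex_continuity_both_nodes (c : nat -> R) : vertex_continuity N K b 0 0 c.
Proof. intros i j _ _; unfold edge_sel; destruct (i <? K)%nat, (j <? K)%nat; ring. Qed.

Section Basis.

Variables (dA dB : R).

Let u j := b j * edge_sel K dA dB j.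

Let u_neq0 j : (j < N)%nat -> ((j < K)%nat -> dA <> 0) -> ((K <= j)%nat -> dB <> 0) -> u j <> 0.
Proof.
  intros Hj HA HB; unfold u, edge_sel.
  apply Rmult_integral_contrapositive; split; [now apply b_neq0 |].
  destruct (Nat.ltb_spec j K); [apply HA | apply HB]; auto.
Qed.

Lemma vertex_basis_both_nodes : dA <> 0 -> dB <> 0 ->
  basis_of N (N - 0 - 1)
    (fun c => vertex_continuity N K b 0 0 c /\ vertex_kirchhoff N K b dA dB c)
    (hyperplane_vec 0 N u).
Proof.
  intros HdA HdB.
  eapply basis_of_equiv; [| apply basis_of_hyperplane; [lia | intros; apply u_neq0; auto; lia]].
  intros c; split; intros [_ Hkir]; split; auto.
  - apply vertex_continuity_both_nodes.
  - intros; lia.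
Qed.

Lemma vertex_basis_left_node (vB : R) : vB <> 0 -> dA <> 0 ->
  basis_of N (K - 0 - 1)
    (fun c => vertex_continuity N K b 0 vB c /\ vertex_kirchhoff N K b dA dB c)
    (hyperplane_vec 0 K u).
Proof.
  intros HvB HdA.
  eapply basis_of_equiv; [| apply basis_of_hyperplane; [lia | intros; apply u_neq0; auto; lia]].
  intros c; rewrite vertex_continuity_left_node by auto.
  split; intros [Hsupp Hkir]; split; auto; intros j Hj HKj; apply Hsupp; auto; lia.
Qed.

Lemma vertex_basis_right_node (vA : R) : vA <> 0 -> dB <> 0 ->
  basis_of N (N - K - 1)
    (fun c => vertex_continuity N K b vA 0 c /\ vertex_kirchhoff N K b dA dB c)
    (hyperplane_vec K N u).
Proof.
  intros HvA HdB.
  eapply basis_of_equiv; [| apply basis_of_hyperplane; [lia | intros; apply u_neq0; auto; lia]].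
  intros c; rewrite vertex_continuity_right_node by auto.
  split; intros [Hsupp Hkir]; split; auto; intros j; intros; apply Hsupp; lia.
Qed.

Lemma vertex_basis_regular_resonant (vA vB : R) :
  vA <> 0 -> vB <> 0 -> vB * dA + vA * dB = 0 ->
  basis_of N 1
    (fun c => vertex_continuity N K b vA vB c /\ vertex_kirchhoff N K b dA dB c)
    (fun _ j => b j / edge_sel K vA vB j).
Proof.
  intros HvA HvB HW.
  eapply basis_of_equiv; [| apply (basis_of_line N 0); [lia |]].
  - intros c; rewrite vertex_continuity_regular by auto; split.
    + intros [g Hg]; split; [now exists g |].
      apply (vertex_kirchhoff_regular vA vB dA dB g); auto; rewrite HW; ring.
    + intros [Hc _]; exact Hc.
  - rewrite edge_sel_lt by lia; apply Rmult_integral_contrapositive; split.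
    + apply b_neq0; lia.
    + now apply Rinv_neq_0_compat.
Qed.

Lemma vertex_basis_regular (vA vB : R) (F : nat -> nat -> R) :
  vA <> 0 -> vB <> 0 -> vB * dA + vA * dB <> 0 ->
  basis_of N 0
    (fun c => vertex_continuity N K b vA vB c /\ vertex_kirchhoff N K b dA dB c) F.
Proof.
  intros HvA HvB HW; apply basis_of_trivial.
  intros c [Hcont Hkir] j Hj.
  destruct (proj1 (vertex_continuity_regular vA vB c HvA HvB) Hcont) as [g Hg].
  apply (vertex_kirchhoff_regular vA vB dA dB g c HvA HvB Hg) in Hkir.
  destruct (Rmult_integral _ _ Hkir) as [-> | ]; [| contradiction].
  rewrite Hg by auto; ring.
Qed.

End Basis.

Lemma vertex_basis (vA vB dA dB : R) : (vA = 0 -> dA <> 0) -> (vB = 0 -> dB <> 0) ->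
  exists F, basis_of N (vertex_multiplicity N K vA vB dA dB)
    (fun c => vertex_continuity N K b vA vB c /\ vertex_kirchhoff N K b dA dB c) F.
Proof.
  intros HA HB; unfold vertex_multiplicity.
  destruct (Req_EM_T vA 0) as [-> | HvA]; destruct (Req_EM_T vB 0) as [-> | HvB];
    destruct (Req_EM_T _ 0) as [HW | HW].
  - replace (K - 1 + (N - K - 1) + 1)%nat with (N - 0 - 1)%nat by lia.
    eexists; now apply vertex_basis_both_nodes; auto.
  - exfalso; apply HW; ring.
  - exfalso; apply (HA eq_refl), (Rmult_eq_reg_l vB); auto; lra.
  - replace (K - 1 + 0 + 0)%nat with (K - 0 - 1)%nat by lia.
    eexists; now apply vertex_basis_left_node; auto.
  - exfalso; apply (HB eq_refl), (Rmult_eq_reg_l vA); auto; lra.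
  - replace (0 + (N - K - 1) + 0)%nat with (N - K - 1)%nat by lia.
    eexists; now apply vertex_basis_right_node; auto.
  - eexists; now apply vertex_basis_regular_resonant.
  - exists (fun _ _ => 0); now apply vertex_basis_regular.
Qed.

End Vertex.

(** * The eigenspace of L_+ *)

Lemma cosh_ge_1 (y : R) : 1 <= cosh y.
Proof.
  unfold cosh; rewrite exp_Ropp.
  pose proof (exp_pos y); pose proof (Rinv_0_lt_compat _ (exp_pos y)).
  assert (exp y * / exp y = 1) by (field; lra).
  pose proof (pow2_ge_0 (exp y - 1)); nra.
Qed.

Lemma sech_pos_le_1 (y : R) : 0 < sech y <= 1.
Proof.
  unfold sech; pose proof (cosh_ge_1 y); split.
  - apply Rinv_0_lt_compat; lra.
  - rewrite <- Rinv_1; apply Rinv_le_contravar; lra.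
Qed.

(* The profile equation reads v'' = linearized_coef p lambda x * v. *)
Definition linearized_coef (p lambda x : R) : R :=
  (1 - lambda) - (2 * p + 1) * (p + 1) * sech (p * x) ^ 2.

Lemma linearized_coef_bound (p lambda x : R) : 0 < p ->
  Rabs (linearized_coef p lambda x) <= Rabs (1 - lambda) + (2 * p + 1) * (p + 1).
Proof.
  intros Hp; unfold linearized_coef; destruct (sech_pos_le_1 (p * x)).
  unfold Rminus at 1; eapply Rle_trans; [apply Rabs_triang |]; rewrite Rabs_Ropp.
  apply Rplus_le_compat_l; rewrite Rabs_right; [| apply Rle_ge, Rmult_le_pos; nra].
  assert (sech (p * x) ^ 2 <= 1) by nra; nra.
Qed.

Lemma linearized_coef_continuous (p lambda x : R) : continuous (linearized_coef p lambda) x.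
Proof.
  apply continuous_of_ex_derive.
  unfold linearized_coef, sech, cosh; auto_derive.
  pose proof (exp_pos (p * x)); pose proof (exp_pos (- (p * x))); lra.
Qed.

Definition edge_shift (K : nat) (a : R) (j : nat) : R := edge_sel K a (- a) j.

Lemma Lplus_pot_shift (p : R) (K : nat) (alpha : nat -> R) (a : R) (j : nat) (x : R) :
  0 < p -> 0 < alpha j ->
  Lplus_pot p K alpha a j x = (2 * p + 1) * (p + 1) * sech (p * (x + edge_shift K a j)) ^ 2.
Proof.
  intros Hp Ha.
  assert (Hpow : forall y, alpha j ^ 2 * Rpower (Rpower (alpha j) (- (1 / p)) * phi p y) (2 * p)
                           = sech (p * y) ^ 2).
  { intros y; unfold phi; destruct (sech_pos_le_1 (p * y)) as [Hs _].
    rewrite <- Rpower_mult_distr by (unfold Rpower; apply exp_pos).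
    rewrite !Rpower_mult.
    replace (- (1 / p) * (2 * p)) with (- INR 2) by (simpl; field; lra).
    replace (1 / p * (2 * p)) with (INR 2) by (simpl; field; lra).
    rewrite Rpower_Ropp, !Rpower_pow by auto.
    field; lra. }
  unfold Lplus_pot, Phi_comp, edge_shift, edge_sel; rewrite Rmult_assoc.
  destruct (j <? K)%nat; rewrite Hpow; auto.
Qed.

Lemma Lplus_eigenvalue_iff_dim_pos (p : R) (N K : nat) (alpha : nat -> R) (a lambda : R)
  (m : nat) :
  eigenspace_dim p N K alpha a lambda m -> (Lplus_eigenvalue p N K alpha a lambda <-> (0 < m)%nat).
Proof.
  intros [F [Heig [Hind Hspan]]]; split.
  - intros [U [HU Hnz]]; destruct m; [exfalso | lia].
    apply Hnz; destruct (Hspan U HU) as [c Hc]; intros j x Hj Hx; now rewrite Hc.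
  - intros Hm; exists (F 0%nat); split; [now apply Heig |]; intros Hz.
    set (d := fun k => if (k =? 0)%nat then 1 else 0).
    assert (Hd : d 0%nat = 0).
    { apply Hind; auto; intros j x Hj Hx.
      rewrite (rsum_ext _ (fun k => if (k =? 0)%nat then F k j x else 0)), rsum_delta by
        (auto; intros k _; unfold d; destruct (k =? 0)%nat; ring).
      now apply Hz. }
    unfold d in Hd; simpl in Hd; lra.
Qed.

Section Eigenspace.

Variables (p : R) (N K : nat) (alpha : nat -> R) (a lambda0 : R) (v : R -> R).
Hypothesis p_pos : 0 < p.
Hypothesis alpha_pos : forall j, (j < N)%nat -> 0 < alpha j.
Hypothesis lambda0_lt_1 : lambda0 < 1.
Hypothesis v_C2 : forall x, ex_derive v x /\ ex_derive (Derive v) x.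
Hypothesis v_eq : forall x, - Derive (Derive v) x + v x
  - (2 * p + 1) * (p + 1) * (sech (p * x)) ^ 2 * v x = lambda0 * v x.
Hypothesis v_asymptotics : is_lim (fun x => v x * exp (sqrt (1 - lambda0) * x)) p_infty 1.

Let Q := linearized_coef p lambda0.
Let k := sqrt (1 - lambda0).
Let M := Rabs (1 - lambda0) + (2 * p + 1) * (p + 1).
Let b j := Rpower (alpha j) (- (1 / p)).

Let k_pos : 0 < k.
Proof. apply sqrt_lt_R0; lra. Qed.

Let v_derive x : is_derive v x (Derive v x).
Proof. destruct (v_C2 x) as [[d Hd] _]; now rewrite (is_derive_unique v x d Hd). Qed.

Let v_ode x : is_derive (Derive v) x (Q x * v x).
Proof.
  destruct (v_C2 x) as [_ [d Hd]]; replace (Q x * v x) with d; auto.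
  rewrite <- (is_derive_unique _ x d Hd); specialize (v_eq x); unfold Q, linearized_coef; lra.
Qed.

Let Q_bounded x : Rabs (Q x) <= M.
Proof. now apply linearized_coef_bound. Qed.

Let Q_continuous x : continuous Q x.
Proof. apply linearized_coef_continuous. Qed.

Let b_pos j : (j < N)%nat -> 0 < b j.
Proof. intros; unfold b, Rpower; apply exp_pos. Qed.

Let alpha_power_inv j : Rpower (alpha j) (1 / p) = / b j.
Proof. unfold b; now rewrite Rpower_Ropp, Rinv_inv. Qed.

Let alpha_power_sqr j : Rpower (alpha j) (- (2 / p)) = b j ^ 2.
Proof. unfold b; simpl; rewrite Rmult_1_r, <- Rpower_plus; f_equal; field; lra. Qed.

Let profile_positive_point :
  exists x1, 0 < x1 /\ forall j, 0 < v (x1 + edge_shift K a j).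
Proof.
  destruct (decaying_solution_eventually v k v_asymptotics) as [X HX].
  exists (Rabs X + Rabs a + 1); split; [pose proof (Rabs_pos X); pose proof (Rabs_pos a); lra |].
  intros j; apply HX.
  pose proof (Rle_abs X); pose proof (Rle_abs a); pose proof (Rle_abs (- a)).
  rewrite Rabs_Ropp in *.
  unfold edge_shift, edge_sel; destruct (j <? K)%nat; lra.
Qed.

Lemma eigvec_edge_profiles (U : nat -> R -> R) :
  Lplus_eigvec p N K alpha a lambda0 U ->
  exists c, (forall j x, (j < N)%nat -> 0 <= x -> U j x = c j * v (x + edge_shift K a j)) /\
    vertex_continuity N K b (v a) (v (- a)) c /\
    vertex_kirchhoff N K b (Derive v a) (Derive v (- a)) c.
Proof.
  intros [[HH2 [Hcont Hkir]] Hode].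
  destruct profile_positive_point as [x1 [Hx1 Hv1]].
  exists (fun j => U j x1 / v (x1 + edge_shift K a j)).
  assert (Hedge : forall j, (j < N)%nat ->
    (forall x, 0 <= x -> U j x = U j x1 / v (x1 + edge_shift K a j) * v (x + edge_shift K a j)) /\
    Derive (U j) 0 = U j x1 / v (x1 + edge_shift K a j) * Derive v (edge_shift K a j)).
  { intros j Hj; apply (H2_solution_proportional v Q k M); auto.
    - intros x Hx; specialize (Hode j x Hj Hx).
      rewrite Lplus_pot_shift in Hode by auto; unfold Q, linearized_coef; lra.
    - specialize (Hv1 j); lra. }
  split; [| split].
  - intros j x Hj Hx; now apply Hedge.
  - intros i j Hi Hj; specialize (Hcont i j Hi Hj).
    rewrite (proj1 (Hedge i Hi) 0), (proj1 (Hedge j Hj) 0), !Rplus_0_l, !alpha_power_inv in Hcont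
      by lra.
    now rewrite <- !(edge_sel_map v).
  - unfold vertex_kirchhoff; rewrite <- Hkir; apply rsum_ext; intros j Hj.
    rewrite (proj2 (Hedge j Hj)); unfold edge_shift; rewrite (edge_sel_map (Derive v)).
    unfold b; ring.
Qed.

Lemma eigvec_of_vertex_conditions (c : nat -> R) :
  vertex_continuity N K b (v a) (v (- a)) c ->
  vertex_kirchhoff N K b (Derive v a) (Derive v (- a)) c ->
  Lplus_eigvec p N K alpha a lambda0 (fun j x => c j * v (x + edge_shift K a j)).
Proof.
  intros Hcont Hkir; split; [split; [| split] |].
  - intros j _; now apply (H2_halfline_shift v Q k M).
  - intros i j Hi Hj; rewrite !Rplus_0_l, !alpha_power_inv; unfold edge_shift.
    rewrite !(edge_sel_map v); apply Hcont; auto.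
  - rewrite <- Hkir; apply rsum_ext; intros j Hj.
    rewrite (Derive_shift v v_derive), Rplus_0_l; unfold edge_shift.
    rewrite (edge_sel_map (Derive v)); unfold b; ring.
  - intros j x Hj Hx.
    rewrite (Derive2_shift v Q v_derive v_ode), Lplus_pot_shift by auto.
    unfold Q, linearized_coef; ring.
Qed.

Lemma eigenspace_dim_of_vertex_basis (m : nat) (F : nat -> nat -> R) :
  basis_of N m (fun c => vertex_continuity N K b (v a) (v (- a)) c /\
                         vertex_kirchhoff N K b (Derive v a) (Derive v (- a)) c) F ->
  eigenspace_dim p N K alpha a lambda0 m.
Proof.
  intros [Hmem [Hind Hspan]].
  exists (fun k j x => F k j * v (x + edge_shift K a j)); split; [| split].
  - intros i Hi; apply eigvec_of_vertex_conditions; apply Hmem, Hi.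
  - intros d Hz; apply Hind; intros j Hj.
    destruct profile_positive_point as [x1 [Hx1 Hv1]].
    specialize (Hz j x1 Hj ltac:(lra)); simpl in Hz.
    rewrite (rsum_ext _ (fun i => d i * F i j * v (x1 + edge_shift K a j))), rsum_scal_r in Hz
      by (intros; ring).
    destruct (Rmult_integral _ _ Hz) as [Hsum | Hsum]; [exact Hsum | specialize (Hv1 j); lra].
  - intros U HU; destruct (eigvec_edge_profiles U HU) as [c [Hc [Hcont Hkir]]].
    destruct (Hspan c (conj Hcont Hkir)) as [d Hd].
    exists d; intros j x Hj Hx.
    rewrite Hc, Hd, <- rsum_scal_r by auto; apply rsum_ext; intros; ring.
Qed.

Lemma eigenspace_dim_vertex_multiplicity :
  (1 <= K)%nat -> (K <= N - 1)%nat ->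
  rsum (fun j => Rpower (alpha j) (- (2 / p))) K
    = rsum (fun i => Rpower (alpha (K + i)%nat) (- (2 / p))) (N - K) ->
  eigenspace_dim p N K alpha a lambda0
    (vertex_multiplicity N K (v a) (v (- a)) (Derive v a) (Derive v (- a))).
Proof.
  intros HK1 HKN Hbal.
  assert (Hbal' : rsum (fun j => b j ^ 2) K = rsum (fun i => b (K + i)%nat ^ 2) (N - K)).
  { rewrite (rsum_ext _ (fun j => Rpower (alpha j) (- (2 / p)))),
      (rsum_ext (fun i => b (K + i)%nat ^ 2) (fun i => Rpower (alpha (K + i)%nat) (- (2 / p))));
      auto; intros; now rewrite alpha_power_sqr. }
  destruct (vertex_basis N K b HK1 HKN b_pos Hbal' (v a) (v (- a)) (Derive v a) (Derive v (- a))
              (decaying_solution_derive_neq0 v Q k M v_derive v_ode Q_bounded v_asymptotics a)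
              (decaying_solution_derive_neq0 v Q k M v_derive v_ode Q_bounded v_asymptotics (- a)))
    as [F HF].
  now apply (eigenspace_dim_of_vertex_basis _ F).
Qed.

End Eigenspace.

Theorem lemma5p4 (p : R) (N K : nat) (alpha : nat -> R) (a lambda0 : R)
  (v : R -> R) :
  0 < p ->
  (2 <= N)%nat ->
  (1 <= K)%nat -> (K <= N - 1)%nat ->
  (forall j, (j < N)%nat -> 0 < alpha j) ->
  rsum (fun j => Rpower (alpha j) (- (2 / p))) K
    = rsum (fun i => Rpower (alpha (K + i)%nat) (- (2 / p))) (N - K) ->
  lambda0 < 1 ->
  (* v = v(. ; lambda0): the solution on R of
     -v'' + v - (2p+1)(p+1) sech^2(p x) v = lambda0 v
     with v(x) e^{sqrt(1 - lambda0) x} -> 1 as x -> +oo *)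
  (forall x, ex_derive v x /\ ex_derive (Derive v) x) ->
  (forall x, - Derive (Derive v) x + v x
               - (2 * p + 1) * (p + 1) * (sech (p * x)) ^ 2 * v x
             = lambda0 * v x) ->
  is_lim (fun x => v x * exp (sqrt (1 - lambda0) * x)) p_infty 1 ->
  (* m = (K-1)[case (a)] + (N-K-1)[case (b)] + 1[case (c)], where
     (a) v(a) = 0, (b) v(-a) = 0, (c) v(-a) v'(a) + v(a) v'(-a) = 0 *)
  let m := ((if Req_EM_T (v a) 0 then (K - 1)%nat else 0%nat)
          + (if Req_EM_T (v (- a)) 0 then (N - K - 1)%nat else 0%nat)
          + (if Req_EM_T (v (- a) * Derive v a + v a * Derive v (- a)) 0
             then 1%nat else 0%nat))%nat in
  (Lplus_eigenvalue p N K alpha a lambda0 <-> (0 < m)%nat) /\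
  eigenspace_dim p N K alpha a lambda0 m.
Proof.
  intros Hp _ HK1 HKN Halpha Hbal Hlambda Hv Hveq Hlim m.
  assert (Hdim : eigenspace_dim p N K alpha a lambda0 m)
    by exact (eigenspace_dim_vertex_multiplicity p N K alpha a lambda0 v
                Hp Halpha Hlambda Hv Hveq Hlim HK1 HKN Hbal).
  split; [now apply Lplus_eigenvalue_iff_dim_pos | exact Hdim].
Qed.
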